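(* Let $f\ge1$, $\lambda_1=\lambda_2=\dots=\lambda_f<1$ be positive reals, $\mu_1,\dots,\mu_f\in\mathbb C$, $\eta\in(-1,1)$, $u\in\mathbb R$, and $$g(s):=e^{\left(u+i\frac{\pi f}{4}\eta\right)(1/2-s)}\prod_{j=1}^f\Gamma(\lambda_js+\mu_j).$$ Let $\rho$ be a pole of $g$ of order $n$ such that $\Re(\lambda_j\rho+\mu_j)\le0$ for $j=1,\dots,f$ and $$\frac{e^{u/\lambda_1}}{\prod_{j=1}^f\left(|1-\lambda_j\rho-\mu_j|-\lambda_j\right)}<\frac12.$$ Let $c_1,\dots,c_n$ be the coefficients of the polar part of $g$ at $\rho$, so that $g(s+\rho)-\sum_{j=1}^nc_js^{-j}$ is holomorphic at $s=0$. Then $$\left|\sum_{l=1}^\infty\operatorname{Res}_{s=\rho-l/\lambda_1}g(s)\right|<\max_j|c_j|.$$ *)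

From Stdlib Require Import Reals Factorial ClassicalEpsilon.
From Coquelicot Require Import Coquelicot.
Open Scope R_scope.

Definition Cexp (z : C) : C :=
  (exp (Re z) * cos (Im z), exp (Re z) * sin (Im z)).

Fixpoint Cprod1 (f : nat) (F : nat -> C) : C :=
  match f with
  | O => RtoC 1
  | S k => Cmult (Cprod1 k F) (F (S k))
  end.

Fixpoint Csum1 (n : nat) (F : nat -> C) : C :=
  match n with
  | O => RtoC 0
  | S k => Cplus (Csum1 k F) (F (S k))
  end.

Fixpoint Rprod1 (f : nat) (F : nat -> R) : R :=
  match f with
  | O => 1
  | S k => Rprod1 k F * F (S k)
  end.

Fixpoint Rmax1 (n : nat) (F : nat -> R) : R :=
  match n with
  | O => 0
  | S O => F 1%nat
  | S k => Rmax (Rmax1 k F) (F (S k))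
  end.

Definition Gamma_seq (s : C) (n : nat) : C :=
  Cdiv (Cmult (Cexp (Cmult s (RtoC (ln (INR n))))) (RtoC (INR (fact n))))
       (Cmult (Cprod1 n (fun k => Cplus s (RtoC (INR (k - 1))))) (Cplus s (RtoC (INR n)))).

(* Complex Gamma function, defined by Gauss' limit formula
   Gamma(s) = lim_{n -> oo} n^s n! / (s(s+1)...(s+n)), valid off the poles
   s = 0,-1,-2,...; at the poles the value is an arbitrary (irrelevant) junk value. *)
Definition CGamma (s : C) : C :=
  epsilon (inhabits (RtoC 0))
    (fun v => filterlim (Gamma_seq s) eventually (locally v)).

Definition C_differentiable_at (h : C -> C) (z : C) : Prop :=
  exists l : C, forall eps : R, 0 < eps -> exists d : R, 0 < d /\
    forall w : C, 0 < Cmod w < d ->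
      Cmod (Cminus (Cdiv (Cminus (h (Cplus z w)) (h z)) w) l) < eps.

Definition holomorphic_at (h : C -> C) (z0 : C) : Prop :=
  exists r : R, 0 < r /\ forall z : C, Cmod (Cminus z z0) < r -> C_differentiable_at h z.

Definition polar_part (g : C -> C) (z0 : C) (N : nat) (c : nat -> C) : Prop :=
  exists (h : C -> C) (d : R), 0 < d /\ holomorphic_at h (RtoC 0) /\
    forall s : C, 0 < Cmod s < d ->
      g (Cplus s z0) = Cplus (Csum1 N (fun j => Cdiv (c j) (Cpow s j))) (h s).

Definition pole_of_order (g : C -> C) (rho : C) (n : nat) (c : nat -> C) : Prop :=
  (1 <= n)%nat /\ c n <> RtoC 0 /\ polar_part g rho n c.

Definition is_residue (g : C -> C) (z0 : C) (r : C) : Prop :=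
  exists (N : nat) (c : nat -> C), polar_part g z0 N c /\
    (match N with O => r = RtoC 0 | S _ => r = c 1%nat end).

(* Write [w_j = lambda rho + mu_j] and [A = u + i pi f eta / 4].  For [s] near 0, the
   functional equation [Gamma (z - l) = Gamma z / prod_{m=1}^l (z - m)] gives
     g (s + rho - l/lambda) = e^(A l/lambda) g (s + rho) prod_j prod_{m=1}^l 1 / (w_j - m + lambda s),
   so the polar part of [g] at [rho - l/lambda] is obtained from the one at [rho] by a
   scaling and by [f l] divisions by affine factors [alpha + lambda s] with
   [|alpha| = |w_j - m| > lambda].  Such a division turns coefficients bounded by [M] into
   coefficients bounded by [M / (|alpha| - lambda)], computed from the highest one downwards.
   As [Re w_j <= 0], [|w_j - m| >= |1 - w_j|], so the residue at [rho - l/lambda] is at most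
   [M q^l] with [q = e^(u/lambda) / prod_j (|1 - w_j| - lambda) < 1/2], where [M = max_j |c_j|];
   summing over [l >= 1] gives at most [M q / (1 - q) < M].

   The Gamma function is Gauss' limit; the limit exists off the poles because the ratio of
   consecutive Gauss products is [1 + O(1/n^2)]. *)

From Stdlib Require Import Reals Factorial Lra Lia Psatz ClassicalEpsilon FunctionalExtensionality.
From Coquelicot Require Import Coquelicot.
Open Scope R_scope.

Lemma Cminus_0_r (z : C) : Cminus z (RtoC 0) = z.
Proof. ring. Qed.

Lemma Cmod_sub_sym (a b : C) : Cmod (Cminus a b) = Cmod (Cminus b a).
Proof. replace (Cminus a b) with (Copp (Cminus b a)) by ring. apply Cmod_opp. Qed.

Lemma Cmod_le_Cmod_sub (a b : C) : Cmod a <= Cmod b + Cmod (Cminus a b).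
Proof.
  replace a with (Cplus b (Cminus a b)) at 1 by ring. apply Cmod_triangle.
Qed.

Lemma affine_neq0_near0 (al la s : C) :
  Cmod s < Cmod al / (Cmod la + 1) -> Cplus al (Cmult la s) <> RtoC 0.
Proof.
  intros Hs E.
  assert (Hla := Cmod_ge_0 la). assert (Hs0 := Cmod_ge_0 s).
  assert (Hlt : Cmod la * Cmod s < Cmod al).
  { assert (Cmod s * (Cmod la + 1) < Cmod al).
    { apply Rmult_lt_reg_r with (/ (Cmod la + 1)); [apply Rinv_0_lt_compat; lra|].
      rewrite Rmult_assoc, Rinv_r, Rmult_1_r by lra. exact Hs. }
    nra. }
  replace al with (Copp (Cmult la s)) in Hlt
    by (replace al with (Cminus (Cplus al (Cmult la s)) (Cmult la s)) by ring; rewrite E; ring).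
  rewrite Cmod_opp, Cmod_mult in Hlt. lra.
Qed.

Lemma Csum1_ext (N : nat) (F G : nat -> C) :
  (forall j, (1 <= j <= N)%nat -> F j = G j) -> Csum1 N F = Csum1 N G.
Proof.
  induction N as [|N IH]; intros H; simpl; [reflexivity|].
  rewrite IH, H; [reflexivity | lia | intros j Hj; apply H; lia].
Qed.

Lemma Csum1_scal_l (N : nat) (K : C) (F : nat -> C) :
  Cmult K (Csum1 N F) = Csum1 N (fun j => Cmult K (F j)).
Proof. induction N as [|N IH]; simpl; [ring|]. rewrite <- IH. ring. Qed.

Lemma Cprod1_ext (f : nat) (F G : nat -> C) :
  (forall j, (1 <= j <= f)%nat -> F j = G j) -> Cprod1 f F = Cprod1 f G.
Proof.
  induction f as [|f IH]; intros H; simpl; [reflexivity|].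
  rewrite IH, H; [reflexivity | lia | intros j Hj; apply H; lia].
Qed.

Lemma Cprod1_mult (f : nat) (F G : nat -> C) :
  Cprod1 f (fun j => Cmult (F j) (G j)) = Cmult (Cprod1 f F) (Cprod1 f G).
Proof. induction f as [|f IH]; simpl; [ring|]. rewrite IH. ring. Qed.

Lemma Rprod1_ext (f : nat) (F G : nat -> R) :
  (forall j, (1 <= j <= f)%nat -> F j = G j) -> Rprod1 f F = Rprod1 f G.
Proof.
  induction f as [|f IH]; intros H; simpl; [reflexivity|].
  rewrite IH, H; [reflexivity | lia | intros j Hj; apply H; lia].
Qed.

Lemma Rprod1_ge0 (f : nat) (F : nat -> R) :
  (forall j, (1 <= j <= f)%nat -> 0 <= F j) -> 0 <= Rprod1 f F.
Proof.
  induction f as [|f IH]; intros H; simpl; [lra|].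
  apply Rmult_le_pos; [apply IH; intros j Hj|]; apply H; lia.
Qed.

Lemma Rprod1_pos (f : nat) (F : nat -> R) :
  (forall j, (1 <= j <= f)%nat -> 0 < F j) -> 0 < Rprod1 f F.
Proof.
  induction f as [|f IH]; intros H; simpl; [lra|].
  apply Rmult_lt_0_compat; [apply IH; intros j Hj|]; apply H; lia.
Qed.

Lemma Rprod1_le (f : nat) (F G : nat -> R) :
  (forall j, (1 <= j <= f)%nat -> 0 <= F j <= G j) -> Rprod1 f F <= Rprod1 f G.
Proof.
  induction f as [|f IH]; intros H; simpl; [lra|].
  apply Rmult_le_compat.
  - apply Rprod1_ge0. intros j Hj. apply H. lia.
  - apply H. lia.
  - apply IH. intros j Hj. apply H. lia.
  - apply H. lia.
Qed.

Lemma Rprod1_const (l : nat) (x : R) : Rprod1 l (fun _ => x) = x ^ l.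
Proof. induction l as [|l IH]; simpl; [reflexivity|]. rewrite IH. ring. Qed.

Lemma Rprod1_pow (f l : nat) (F : nat -> R) :
  Rprod1 f (fun j => F j ^ l) = Rprod1 f F ^ l.
Proof.
  induction f as [|f IH]; simpl; [now rewrite pow1|].
  rewrite IH. apply eq_sym, Rpow_mult_distr.
Qed.

Lemma Rprod1_inv (f : nat) (F : nat -> R) :
  Rprod1 f (fun j => / F j) = / Rprod1 f F.
Proof.
  induction f as [|f IH]; simpl; [field|]. rewrite IH. apply eq_sym, Rinv_mult.
Qed.

Lemma Rmax1_ge (n : nat) (F : nat -> R) (j : nat) :
  (1 <= j <= n)%nat -> F j <= Rmax1 n F.
Proof.
  induction n as [|n IH]; intros Hj; [lia|].
  destruct n as [|n]; [replace j with 1%nat by lia; simpl; lra|].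
  change (Rmax1 (S (S n)) F) with (Rmax (Rmax1 (S n) F) (F (S (S n)))).
  destruct (Nat.eq_dec j (S (S n))) as [->|E]; [apply Rmax_r|].
  eapply Rle_trans; [apply IH; lia | apply Rmax_l].
Qed.

Lemma Cexp_plus (x y : C) : Cexp (Cplus x y) = Cmult (Cexp x) (Cexp y).
Proof.
  destruct x as [a b], y as [c d]. unfold Cexp, Cmult, Cplus. simpl.
  rewrite exp_plus, cos_plus, sin_plus. f_equal; ring.
Qed.

Lemma Cexp_RtoC (r : R) : Cexp (RtoC r) = RtoC (exp r).
Proof. unfold Cexp, RtoC. simpl. rewrite cos_0, sin_0. f_equal; ring. Qed.

Lemma Cmod_Cexp (w : C) : Cmod (Cexp w) = exp (Re w).
Proof.
  destruct w as [a b]. unfold Cexp, Cmod. simpl.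
  replace (exp a * cos b * (exp a * cos b * 1) + exp a * sin b * (exp a * sin b * 1))
    with (exp a * exp a * ((sin b)^2 + (cos b)^2)) by ring.
  rewrite <- !Rsqr_pow2, sin2_cos2, Rmult_1_r.
  apply sqrt_square. left. apply exp_pos.
Qed.

Lemma exp_mult_INR (x : R) (l : nat) : exp (x * INR l) = exp x ^ l.
Proof.
  induction l as [|l IH]; [simpl; rewrite Rmult_0_r; apply exp_0|].
  rewrite S_INR, Rmult_plus_distr_l, Rmult_1_r, exp_plus, IH. simpl. ring.
Qed.

Lemma exp_taylor1_bound (a : R) :
  Rabs a <= 1/2 -> Rabs (exp a - 1 - a) <= 2 * a^2 /\ exp a <= 2.
Proof.
  intros Ha. apply Rabs_le_between in Ha.
  assert (H1 := exp_ineq1_le a).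
  assert (Hp := exp_pos a).
  assert (Hup : exp a * (1 - a) <= 1).
  { assert (H2 := exp_ineq1_le (-a)).
    assert (E : exp a * exp (-a) = 1) by (rewrite <- exp_plus, Rplus_opp_r; apply exp_0).
    nra. }
  assert (Hinv : exp a <= / (1 - a)).
  { apply Rmult_le_reg_r with (1 - a); [lra|]. rewrite Rinv_l by lra. lra. }
  assert (Hquad : / (1 - a) - 1 - a <= 2 * a^2).
  { replace (/ (1 - a) - 1 - a) with (a^2 / (1 - a)) by (field; lra).
    apply Rmult_le_reg_r with (1 - a); [lra|].
    unfold Rdiv. rewrite Rmult_assoc, Rinv_l by lra. nra. }
  assert (/ (1 - a) <= 2).
  { apply Rmult_le_reg_r with (1 - a); [lra|]. rewrite Rinv_l by lra. lra. }
  split; [apply Rabs_le; split; nra | lra].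
Qed.

Lemma cos_taylor1_bound (b : R) : Rabs b <= 1/2 -> Rabs (cos b - 1) <= b^2 / 2.
Proof.
  intros Hb. apply Rabs_le_between in Hb.
  destruct (pre_cos_bound b 0 ltac:(lra) ltac:(lra)) as [H1 _].
  replace (cos_approx b (2 * 0 + 1)) with (1 - b^2/2) in H1
    by (unfold cos_approx, cos_term; simpl; field).
  assert (H2 := COS_bound b).
  apply Rabs_le. split; nra.
Qed.

Lemma sin_taylor1_bound_pos (b : R) : 0 <= b <= 1/2 -> Rabs (sin b - b) <= b^2.
Proof.
  intros Hb. destruct (pre_sin_bound b 0 ltac:(lra) ltac:(lra)) as [H1 H2].
  replace (sin_approx b (2 * 0 + 1)) with (b - b^3/6) in H1
    by (unfold sin_approx, sin_term; simpl; field).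
  replace (sin_approx b (2 * (0 + 1))) with (b - b^3/6 + b^5/120) in H2
    by (unfold sin_approx, sin_term; simpl; field).
  assert (0 <= b^3) by (apply pow_le; lra).
  assert (b^3 <= b^2 / 2) by nra.
  assert (b^5 <= b^3) by nra.
  apply Rabs_le. split; nra.
Qed.

Lemma sin_taylor1_bound (b : R) : Rabs b <= 1/2 -> Rabs (sin b - b) <= b^2.
Proof.
  intros Hb. apply Rabs_le_between in Hb.
  destruct (Rle_dec 0 b) as [P|P]; [apply sin_taylor1_bound_pos; lra|].
  assert (H := sin_taylor1_bound_pos (-b) ltac:(lra)).
  rewrite sin_neg in H.
  replace (- sin b - - b) with (- (sin b - b)) in H by ring.
  rewrite Rabs_Ropp in H. replace ((-b)^2) with (b^2) in H by ring. exact H.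
Qed.

Lemma Cmod_le_Rabs_sum (x : C) : Cmod x <= Rabs (Re x) + Rabs (Im x).
Proof.
  destruct x as [a b]. unfold Cmod. simpl.
  rewrite <- (sqrt_Rsqr (Rabs a + Rabs b)) by (apply Rplus_le_le_0_compat; apply Rabs_pos).
  apply sqrt_le_1_alt. unfold Rsqr.
  assert (0 <= Rabs a) by apply Rabs_pos. assert (0 <= Rabs b) by apply Rabs_pos.
  assert (a * a = Rabs a * Rabs a) by (rewrite <- Rabs_mult, Rabs_pos_eq; nra).
  assert (b * b = Rabs b * Rabs b) by (rewrite <- Rabs_mult, Rabs_pos_eq; nra).
  nra.
Qed.

Lemma Cexp_taylor1_bound (w : C) :
  Cmod w <= 1/2 -> Cmod (Cminus (Cminus (Cexp w) (RtoC 1)) w) <= 8 * Cmod w ^ 2.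
Proof.
  intros Hw. destruct w as [a b].
  assert (Hm := Rmax_Cmod (a, b)). simpl fst in Hm. simpl snd in Hm.
  assert (Ha : Rabs a <= Cmod (a, b)) by (eapply Rle_trans; [apply Rmax_l | exact Hm]).
  assert (Hb : Rabs b <= Cmod (a, b)) by (eapply Rle_trans; [apply Rmax_r | exact Hm]).
  set (r := Cmod (a, b)) in *.
  eapply Rle_trans; [apply Cmod_le_Rabs_sum|].
  change (Re (Cminus (Cminus (Cexp (a, b)) (RtoC 1)) (a, b))) with (exp a * cos b - 1 - a).
  change (Im (Cminus (Cminus (Cexp (a, b)) (RtoC 1)) (a, b))) with (exp a * sin b - 0 - b).
  destruct (exp_taylor1_bound a ltac:(lra)) as [E1 E2].
  assert (C1 := cos_taylor1_bound b ltac:(lra)).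
  assert (S1 := sin_taylor1_bound b ltac:(lra)).
  assert (Hep := exp_pos a).
  assert (Pa := Rabs_pos a). assert (Pb := Rabs_pos b).
  assert (Sa : a^2 <= r^2) by (rewrite <- (pow2_abs a); apply pow_incr; lra).
  assert (Sb : b^2 <= r^2) by (rewrite <- (pow2_abs b); apply pow_incr; lra).
  assert (Sa' : a^2 <= Rabs a / 2) by (rewrite <- (pow2_abs a); nra).
  assert (Sb' : b^2 <= Rabs b / 2) by (rewrite <- (pow2_abs b); nra).
  assert (Re_bound : Rabs (exp a * cos b - 1 - a) <= 3 * r^2).
  { replace (exp a * cos b - 1 - a) with ((exp a - 1 - a) + exp a * (cos b - 1)) by ring.
    eapply Rle_trans; [apply Rabs_triang|].
    rewrite Rabs_mult, (Rabs_pos_eq (exp a)) by lra.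
    assert (exp a * Rabs (cos b - 1) <= 2 * (b^2 / 2))
      by (apply Rmult_le_compat; [lra | apply Rabs_pos | lra | lra]).
    lra. }
  assert (Im_bound : Rabs (exp a * sin b - 0 - b) <= 5 * r^2).
  { replace (exp a * sin b - 0 - b) with ((exp a - 1) * sin b + (sin b - b)) by ring.
    eapply Rle_trans; [apply Rabs_triang|]. rewrite Rabs_mult.
    assert (G1 : Rabs (exp a - 1) <= 2 * Rabs a).
    { replace (exp a - 1) with ((exp a - 1 - a) + a) by ring.
      eapply Rle_trans; [apply Rabs_triang | lra]. }
    assert (G2 : Rabs (sin b) <= 2 * Rabs b).
    { replace (sin b) with ((sin b - b) + b) by ring.
      eapply Rle_trans; [apply Rabs_triang | lra]. }
    assert (Rabs (exp a - 1) * Rabs (sin b) <= (2 * Rabs a) * (2 * Rabs b))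
      by (apply Rmult_le_compat; auto using Rabs_pos).
    assert (Rabs a * Rabs b <= r^2) by nra.
    lra. }
  lra.
Qed.

Lemma filterlim_C_seq_spec (u : nat -> C) (l : C) :
  filterlim u eventually (locally l) <->
  forall eps, 0 < eps -> exists N, forall n, (N <= n)%nat -> Cmod (Cminus (u n) l) < eps.
Proof.
  rewrite filterlim_locally_ball_norm. split.
  - intros H eps He. destruct (H (mkposreal eps He)) as [N HN]. exists N. exact HN.
  - intros H [eps He]. destruct (H eps He) as [N HN]. exists N. exact HN.
Qed.

Lemma filterlim_seq_shift (b : nat -> C) (N0 : nat) (v : C) :
  filterlim (fun k => b (k + N0)%nat) eventually (locally v) ->
  filterlim b eventually (locally v).
Proof.
  rewrite !filterlim_C_seq_spec. intros H eps He.
  destruct (H eps He) as [N HN]. exists (N + N0)%nat. intros n Hn.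
  replace n with (n - N0 + N0)%nat by lia. apply HN. lia.
Qed.

Lemma locally_C_spec (x : C) (P : C -> Prop) :
  locally x P <-> exists d, 0 < d /\ forall w, Cmod (Cminus w x) < d -> P w.
Proof.
  split.
  - intros H. apply (locally_norm_le_locally (V := C_NormedModule)) in H as [[d Hd] H].
    exists d. split; [exact Hd|]. intros w Hw. apply H. exact Hw.
  - intros [d [Hd H]]. apply (locally_le_locally_norm (V := C_NormedModule)).
    exists (mkposreal d Hd). intros w Hw. apply H. exact Hw.
Qed.

Lemma filterlim_Cplus {T : Type} {F : (T -> Prop) -> Prop} {FF : Filter F}
  (A B : T -> C) (a b : C) :
  filterlim A F (locally a) -> filterlim B F (locally b) ->
  filterlim (fun t => Cplus (A t) (B t)) F (locally (Cplus a b)).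
Proof.
  intros HA HB. exact (filterlim_comp_2 _ _ Cplus HA HB (filterlim_plus (V := C_NormedModule) a b)).
Qed.

(* Coquelicot gives [C] two uniform structures, with max-norm balls ([C_NormedModule]) and with
   [Cmod] balls ([C_AbsRing]); [filterlim_mult] is stated for the latter. *)
Lemma locally_C_AbsRing (x : C) (P : C -> Prop) :
  @locally (AbsRing_UniformSpace C_AbsRing) x P <-> locally x P.
Proof.
  rewrite locally_C_spec. split.
  - intros [[d Hd] H]. exists d. split; [exact Hd|]. intros w Hw. apply H. exact Hw.
  - intros [d [Hd H]]. exists (mkposreal d Hd). intros w Hw. apply H. exact Hw.
Qed.

Lemma filterlim_Cmult {T : Type} {F : (T -> Prop) -> Prop} {FF : Filter F}
  (A B : T -> C) (a b : C) :
  filterlim A F (locally a) -> filterlim B F (locally b) ->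
  filterlim (fun t => Cmult (A t) (B t)) F (locally (Cmult a b)).
Proof.
  intros HA HB. apply (filterlim_comp_2 _ _ Cmult HA HB). intros P HP.
  apply locally_C_AbsRing in HP.
  destruct (filterlim_mult (K := C_AbsRing) a b _ HP) as [Q R HQ HR H].
  apply (Filter_prod _ _ _ Q R); [now apply locally_C_AbsRing.. | exact H].
Qed.

Lemma is_series_telescoping (x : nat -> R) :
  is_lim_seq x 0 -> is_series (fun k => x k - x (S k)) (x O).
Proof.
  intros Hx.
  assert (Hsum : forall m, sum_n (fun k => x k - x (S k)) m = x O - x (S m)).
  { induction m as [|m IH]; [now rewrite sum_O|].
    rewrite sum_Sn, IH.
    change (x O - x (S m) + (x (S m) - x (S (S m))) = x O - x (S (S m))). ring. }
  apply (filterlim_ext (fun m => x O - x (S m))); [intros m; now rewrite Hsum|].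
  assert (H : is_lim_seq (fun m => x O - x (S m)) (x O - 0)).
  { apply (is_lim_seq_minus' (fun _ => x O) (fun m => x (S m))).
    - apply is_lim_seq_const.
    - now apply (is_lim_seq_incr_1 x). }
  rewrite Rminus_0_r in H. exact H.
Qed.

Lemma ex_lim_of_telescoping_increments (b : nat -> C) (x : nat -> R) :
  is_lim_seq x 0 -> (forall k, Cmod (Cminus (b (S k)) (b k)) <= x k - x (S k)) ->
  exists v, filterlim b eventually (locally v).
Proof.
  intros Hx Hb.
  set (d := fun k => Cminus (b (S k)) (b k)).
  destruct (@ex_series_le C_AbsRing C_CompleteNormedModule d (fun k => x k - x (S k)))
    as [Sd HSd].
  { intros k. apply Hb. }
  { eexists. now apply is_series_telescoping. }
  assert (Hsum : forall m, sum_n d m = Cminus (b (S m)) (b O)).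
  { induction m as [|m IH]; [now rewrite sum_O|].
    rewrite sum_Sn, IH.
    change (Cplus (Cminus (b (S m)) (b O)) (d (S m)) = Cminus (b (S (S m))) (b O)).
    unfold d. ring. }
  exists (Cplus Sd (b O)). apply (filterlim_seq_shift b 1).
  revert HSd. unfold is_series. rewrite !filterlim_C_seq_spec. intros HSd eps He.
  destruct (HSd eps He) as [N HN]. exists N. intros n Hn.
  replace (Cminus (b (n + 1)%nat) (Cplus Sd (b O))) with (Cminus (sum_n d n) Sd).
  - now apply HN.
  - rewrite Hsum, Nat.add_1_r. ring.
Qed.

Lemma Cmod_le_of_ratio_bound (b rho : nat -> C) (N0 : nat) (K : R) :
  (1 <= N0)%nat -> 0 <= K ->
  (forall n, (N0 <= n)%nat -> b (S n) = Cmult (b n) (rho n)) ->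
  (forall n, (N0 <= n)%nat -> Cmod (Cminus (rho n) (RtoC 1)) <= K / INR n - K / INR (S n)) ->
  forall n, (N0 <= n)%nat -> Cmod (b n) <= Cmod (b N0) * exp (K / INR N0).
Proof.
  intros HN0 HK Hrec Hrho.
  (* [|b n| exp (K / n)] is nonincreasing, as [|rho n| <= 1 + K/n - K/(n+1) <= exp (K/n - K/(n+1))] *)
  set (G := fun n => Cmod (b n) * exp (K / INR n)).
  assert (HG : forall n, (N0 <= n)%nat -> G (S n) <= G n).
  { intros n Hn. unfold G. rewrite Hrec, Cmod_mult by exact Hn.
    assert (Hr : Cmod (rho n) <= exp (K / INR n - K / INR (S n))).
    { eapply Rle_trans; [apply (Cmod_le_Cmod_sub (rho n) (RtoC 1))|].
      assert (H := exp_ineq1_le (K / INR n - K / INR (S n))).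
      specialize (Hrho n Hn). rewrite Cmod_1. lra. }
    replace (exp (K / INR n)) with (exp (K / INR n - K / INR (S n)) * exp (K / INR (S n)))
      by (rewrite <- exp_plus; f_equal; ring).
    rewrite <- Rmult_assoc. apply Rmult_le_compat_r; [left; apply exp_pos|].
    apply Rmult_le_compat_l; [apply Cmod_ge_0 | exact Hr]. }
  intros n Hn. apply Rle_trans with (G n).
  - unfold G. assert (H := exp_ineq1_le (K / INR n)).
    assert (0 <= K / INR n) by (apply Rdiv_le_0_compat; [exact HK | apply lt_0_INR; lia]).
    assert (Hb0 := Cmod_ge_0 (b n)). nra.
  - replace n with (n - N0 + N0)%nat by lia. induction (n - N0)%nat as [|k IH]; [apply Rle_refl|].
    apply Rle_trans with (G (k + N0)%nat); [apply (HG (k + N0)%nat); lia | exact IH].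
Qed.

Lemma ex_lim_of_ratio_bound (b rho : nat -> C) (N0 : nat) (K : R) :
  (1 <= N0)%nat -> 0 <= K ->
  (forall n, (N0 <= n)%nat -> b (S n) = Cmult (b n) (rho n)) ->
  (forall n, (N0 <= n)%nat -> Cmod (Cminus (rho n) (RtoC 1)) <= K / (INR n * INR (S n))) ->
  exists v, filterlim b eventually (locally v).
Proof.
  intros HN0 HK Hrec Hrho.
  assert (Htel : forall n, (N0 <= n)%nat -> K / (INR n * INR (S n)) = K / INR n - K / INR (S n)).
  { intros n Hn. assert (0 < INR n) by (apply lt_0_INR; lia). rewrite S_INR. field. lra. }
  assert (Hrho' : forall n, (N0 <= n)%nat ->
                    Cmod (Cminus (rho n) (RtoC 1)) <= K / INR n - K / INR (S n))
    by (intros n Hn; rewrite <- Htel by exact Hn; now apply Hrho).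
  set (B := Cmod (b N0) * exp (K / INR N0)).
  assert (Hbound := Cmod_le_of_ratio_bound b rho N0 K HN0 HK Hrec Hrho').
  assert (HB : 0 <= B) by (apply Rle_trans with (Cmod (b N0)); [apply Cmod_ge_0 | now apply Hbound]).
  destruct (ex_lim_of_telescoping_increments (fun k => b (k + N0)%nat)
              (fun k => B * K / INR (k + N0))) as [v Hv].
  - assert (H : is_lim_seq (fun k => / INR (k + N0)) 0).
    { apply (is_lim_seq_incr_n (fun n => / INR n) N0).
      apply (is_lim_seq_inv _ p_infty); [apply is_lim_seq_INR | discriminate]. }
    apply (is_lim_seq_scal_l _ (B * K)) in H. simpl in H. rewrite Rmult_0_r in H.
    exact H.
  - intros k. set (n := (k + N0)%nat). change (S k + N0)%nat with (S n).
    rewrite Hrec by lia.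
    replace (Cminus (Cmult (b n) (rho n)) (b n)) with (Cmult (b n) (Cminus (rho n) (RtoC 1)))
      by ring.
    rewrite Cmod_mult. unfold Rdiv. rewrite !Rmult_assoc, <- Rmult_minus_distr_l.
    apply Rmult_le_compat; [apply Cmod_ge_0 | apply Cmod_ge_0 | apply Hbound; lia|].
    apply Hrho'. lia.
  - exists v. now apply (filterlim_seq_shift b N0).
Qed.

(** * The Gamma function as the limit of Gauss' products *)

Definition noninteger (z : C) : Prop := forall k : Z, z <> RtoC (IZR k).

Definition pochhammer (z : C) (n : nat) : C :=
  Cprod1 n (fun k => Cplus z (RtoC (INR (k - 1)))).

Lemma pochhammer_S (z : C) (n : nat) :
  pochhammer z (S n) = Cmult (pochhammer z n) (Cplus z (RtoC (INR n))).
Proof. unfold pochhammer. simpl Cprod1. now rewrite Nat.sub_0_r. Qed.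

Lemma pochhammer_sub1 (z : C) (n : nat) :
  Cmult (pochhammer (Cminus z (RtoC 1)) n) (Cplus (Cminus z (RtoC 1)) (RtoC (INR n))) =
  Cmult (Cminus z (RtoC 1)) (pochhammer z n).
Proof.
  induction n as [|n IH]; [unfold pochhammer; simpl; ring|].
  rewrite !pochhammer_S, S_INR, RtoC_plus.
  transitivity (Cmult (Cmult (pochhammer (Cminus z (RtoC 1)) n)
                             (Cplus (Cminus z (RtoC 1)) (RtoC (INR n)))) (Cplus z (RtoC (INR n)))).
  - ring.
  - rewrite IH. ring.
Qed.

Lemma noninteger_add_nat_neq0 (z : C) (n : nat) :
  noninteger z -> Cplus z (RtoC (INR n)) <> RtoC 0.
Proof.
  intros Hz E. apply (Hz (- Z.of_nat n)%Z).
  rewrite opp_IZR, <- INR_IZR_INZ, RtoC_opp.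
  replace z with (Cminus (Cplus z (RtoC (INR n))) (RtoC (INR n))) by ring.
  rewrite E. ring.
Qed.

Lemma noninteger_sub_nat (z : C) (l : nat) :
  noninteger z -> noninteger (Cminus z (RtoC (INR l))).
Proof.
  intros Hz k E. apply (Hz (k + Z.of_nat l)%Z).
  rewrite plus_IZR, <- INR_IZR_INZ, RtoC_plus, <- E. ring.
Qed.

Lemma noninteger_sub1_neq0 (z : C) : noninteger z -> Cminus z (RtoC 1) <> RtoC 0.
Proof. intros Hz E. apply (Hz 1%Z). rewrite <- (Cplus_0_l (RtoC (IZR 1))), <- E. ring. Qed.

Lemma pochhammer_neq0 (z : C) (n : nat) : noninteger z -> pochhammer z n <> RtoC 0.
Proof.
  intros Hz. induction n as [|n IH]; [apply C1_nz|].
  rewrite pochhammer_S. apply Cmult_neq_0; [exact IH | now apply noninteger_add_nat_neq0].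
Qed.

Lemma Gamma_seq_eq (z : C) (n : nat) :
  Gamma_seq z n = Cdiv (Cmult (Cexp (Cmult z (RtoC (ln (INR n))))) (RtoC (INR (fact n))))
                       (Cmult (pochhammer z n) (Cplus z (RtoC (INR n)))).
Proof. reflexivity. Qed.

Definition gauss_ratio (z : C) (x : R) : C :=
  Cdiv (Cmult (Cexp (Cmult z (RtoC (ln ((x + 1) / x))))) (RtoC (x + 1))) (Cplus z (RtoC (x + 1))).

Lemma Gamma_seq_S (z : C) (n : nat) : noninteger z -> (1 <= n)%nat ->
  Gamma_seq z (S n) = Cmult (Gamma_seq z n) (gauss_ratio z (INR n)).
Proof.
  intros Hz Hn. rewrite !Gamma_seq_eq. unfold gauss_ratio.
  assert (Hx : 0 < INR n) by (apply lt_0_INR; lia).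
  assert (El : ln (INR (S n)) = ln (INR n) + ln ((INR n + 1) / INR n)).
  { rewrite <- ln_mult by (try apply Rdiv_lt_0_compat; lra).
    rewrite S_INR. f_equal. field. lra. }
  rewrite El, RtoC_plus, Cmult_plus_distr_l, Cexp_plus, fact_simpl, mult_INR, RtoC_mult,
    pochhammer_S, <- S_INR.
  assert (H1 := pochhammer_neq0 z n Hz).
  assert (H2 := noninteger_add_nat_neq0 z n Hz).
  assert (H3 := noninteger_add_nat_neq0 z (S n) Hz).
  field. auto.
Qed.

Lemma ln_succ_div_bounds (x : R) : 0 < x -> 1 / (x + 1) <= ln ((x + 1) / x) <= 1 / x.
Proof.
  intros Hx.
  assert (ln_le : forall y, 0 < y -> ln y <= y - 1).
  { intros y Hy. assert (H := exp_ineq1_le (ln y)). rewrite exp_ln in H; lra. }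
  split.
  - replace ((x + 1) / x) with (/ (x / (x + 1))) by (field; lra).
    rewrite ln_Rinv by (apply Rdiv_lt_0_compat; lra).
    assert (H := ln_le (x / (x + 1)) ltac:(apply Rdiv_lt_0_compat; lra)).
    replace (x / (x + 1) - 1) with (- (1 / (x + 1))) in H by (field; lra). lra.
  - assert (H := ln_le ((x + 1) / x) ltac:(apply Rdiv_lt_0_compat; lra)).
    replace ((x + 1) / x - 1) with (1 / x) in H by (field; lra). lra.
Qed.

Lemma Cexp_mul_taylor1_bound (z : C) (L x : R) : 0 <= L -> L * x <= 1 -> 2 * Cmod z + 1 <= x ->
  Cmod (Cminus (Cminus (Cexp (Cmult z (RtoC L))) (RtoC 1)) (Cmult z (RtoC L))) * (x * x)
  <= 8 * Cmod z ^ 2.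
Proof.
  intros HL0 HLx Hx. set (a := Cmod z) in *. assert (Ha : 0 <= a) by apply Cmod_ge_0.
  set (w := Cmult z (RtoC L)).
  assert (Hw : Cmod w = a * L) by (unfold w; rewrite Cmod_mult, Cmod_R, Rabs_pos_eq; auto).
  assert (HaLx : a * L * x <= a) by nra.
  assert (HaL : a * L <= 1/2).
  { apply Rmult_le_reg_r with (2 * a + 1); [lra|].
    assert (a * L * (2 * a + 1) <= a * L * x) by (apply Rmult_le_compat_l; nra). nra. }
  assert (H := Cexp_taylor1_bound w ltac:(rewrite Hw; exact HaL)).
  assert ((Cmod w * x)^2 <= a^2)
    by (apply pow_incr; rewrite Hw; split; [apply Rmult_le_pos; [apply Rmult_le_pos|]; lra | exact HaLx]).
  assert (Cmod (Cminus (Cminus (Cexp w) (RtoC 1)) w) * (x * x) <= 8 * Cmod w ^ 2 * (x * x))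
    by (apply Rmult_le_compat_r; nra).
  nra.
Qed.

Lemma gauss_ratio_sub1_bound (z : C) (x : R) : 2 * Cmod z + 1 <= x ->
  Cmod (Cminus (gauss_ratio z x) (RtoC 1)) <= 2 * (16 * Cmod z ^ 2 + Cmod z) / (x * (x + 1)).
Proof.
  intros Hx. set (a := Cmod z) in *. assert (Ha : 0 <= a) by apply Cmod_ge_0.
  set (L := ln ((x + 1) / x)).
  destruct (ln_succ_div_bounds x ltac:(lra)) as [HL1 HL2]. fold L in HL1, HL2.
  assert (HL0 : 0 <= L) by (assert (0 < 1 / (x + 1)) by (apply Rdiv_lt_0_compat; lra); lra).
  assert (HLx : L * x <= 1) by (assert (1 / x * x = 1) by (field; lra); nra).
  assert (HLx1 : 1 <= L * (x + 1)) by (assert (1 / (x + 1) * (x + 1) = 1) by (field; lra); nra).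
  set (E := Cminus (Cminus (Cexp (Cmult z (RtoC L))) (RtoC 1)) (Cmult z (RtoC L))).
  assert (HE := Cexp_mul_taylor1_bound z L x HL0 HLx Hx). fold a E in HE.
  set (D := Cplus z (RtoC (x + 1))).
  assert (HD : (x + 1) / 2 <= Cmod D).
  { assert (T := Cmod_le_Cmod_sub (RtoC (x + 1)) D).
    replace (Cminus (RtoC (x + 1)) D) with (Copp z) in T by (unfold D; ring).
    rewrite Cmod_R, Cmod_opp, Rabs_pos_eq in T by lra. fold a in T. lra. }
  assert (HD0 : D <> RtoC 0) by (intro E0; rewrite E0, Cmod_0 in HD; lra).
  set (P := Cplus (Cmult (RtoC (x + 1)) E) (Cmult z (RtoC ((x + 1) * L - 1)))).
  replace (Cminus (gauss_ratio z x) (RtoC 1)) with (Cdiv P D).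
  2: { unfold gauss_ratio, P, E, L, D in *. rewrite RtoC_minus, RtoC_mult. field. exact HD0. }
  assert (HP : Cmod P * x <= 16 * a^2 + a).
  { eapply Rle_trans; [apply Rmult_le_compat_r; [lra | apply Cmod_triangle]|].
    rewrite !Cmod_mult, !Cmod_R, (Rabs_pos_eq (x + 1)), (Rabs_pos_eq ((x + 1) * L - 1)) by lra.
    fold a. assert (HE0 := Cmod_ge_0 E).
    assert (((x + 1) * L - 1) * x <= 1).
    { assert ((x + 1) * (L * x) <= (x + 1) * 1) by (apply Rmult_le_compat_l; lra). nra. }
    assert (Cmod E * x <= Cmod E * (x * x)) by (apply Rmult_le_compat_l; nra).
    assert (a * (((x + 1) * L - 1) * x) <= a * 1) by (apply Rmult_le_compat_l; lra).
    nra. }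
  rewrite Cmod_div by exact HD0.
  assert (HP0 := Cmod_ge_0 P).
  apply Rmult_le_reg_r with (x * (x + 1) * Cmod D); [apply Rmult_lt_0_compat; nra|].
  replace (Cmod P / Cmod D * (x * (x + 1) * Cmod D)) with (Cmod P * x * (x + 1)) by (field; lra).
  replace (2 * (16 * a ^ 2 + a) / (x * (x + 1)) * (x * (x + 1) * Cmod D))
    with (2 * (16 * a ^ 2 + a) * Cmod D) by (field; lra).
  nra.
Qed.

Lemma Gamma_seq_ex_lim (z : C) :
  noninteger z -> exists v, filterlim (Gamma_seq z) eventually (locally v).
Proof.
  intros Hz. set (a := Cmod z). assert (Ha : 0 <= a) by apply Cmod_ge_0.
  destruct (INR_unbounded (2 * a + 1)) as [N1 HN1].
  apply (ex_lim_of_ratio_bound _ (fun n => gauss_ratio z (INR n)) (S N1) (2 * (16 * a^2 + a)));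
    [lia | nra | intros n Hn; apply Gamma_seq_S; [exact Hz | lia] |].
  intros n Hn. rewrite S_INR. apply gauss_ratio_sub1_bound.
  assert (INR N1 <= INR n) by (apply le_INR; lia). fold a. lra.
Qed.

Lemma CGamma_is_lim (z : C) :
  noninteger z -> filterlim (Gamma_seq z) eventually (locally (CGamma z)).
Proof.
  intros Hz. unfold CGamma. apply epsilon_spec. now apply Gamma_seq_ex_lim.
Qed.

Lemma Gamma_seq_sub1 (z : C) (n : nat) : noninteger z -> (1 <= n)%nat ->
  Cmult (Cminus z (RtoC 1)) (Gamma_seq (Cminus z (RtoC 1)) n) =
  Cmult (Gamma_seq z n) (Cplus (RtoC 1) (Cdiv z (RtoC (INR n)))).
Proof.
  intros Hz Hn. rewrite !Gamma_seq_eq.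
  assert (Hx : 0 < INR n) by (apply lt_0_INR; lia).
  assert (Hn0 : RtoC (INR n) <> RtoC 0) by (intro E; apply RtoC_inj in E; lra).
  replace (Cmult (Cminus z (RtoC 1)) (RtoC (ln (INR n))))
    with (Cplus (Cmult z (RtoC (ln (INR n)))) (RtoC (- ln (INR n)))) by (rewrite RtoC_opp; ring).
  rewrite Cexp_plus, Cexp_RtoC, exp_Ropp, exp_ln, RtoC_inv, pochhammer_sub1 by lra.
  assert (H1 := pochhammer_neq0 z n Hz).
  assert (H2 := noninteger_add_nat_neq0 z n Hz).
  assert (H3 := noninteger_sub1_neq0 z Hz).
  field. auto.
Qed.

Lemma CGamma_sub1 (z : C) :
  noninteger z -> Cmult (Cminus z (RtoC 1)) (CGamma (Cminus z (RtoC 1))) = CGamma z.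
Proof.
  intros Hz.
  assert (Hz1 : noninteger (Cminus z (RtoC 1))) by exact (noninteger_sub_nat z 1 Hz).
  assert (Hfactor : filterlim (fun n => Cplus (RtoC 1) (Cdiv z (RtoC (INR n)))) eventually
                      (locally (RtoC 1))).
  { apply filterlim_C_seq_spec. intros eps He.
    destruct (INR_unbounded (Cmod z / eps)) as [N HN]. exists (S N). intros n Hn.
    assert (HNn : INR N <= INR n) by (apply le_INR; lia).
    assert (Hx : 0 < INR n) by (apply lt_0_INR; lia).
    replace (Cminus (Cplus (RtoC 1) (Cdiv z (RtoC (INR n)))) (RtoC 1)) with (Cdiv z (RtoC (INR n)))
      by ring.
    rewrite Cmod_div, Cmod_R, Rabs_pos_eq by (try (intro E; apply RtoC_inj in E); lra).
    apply Rmult_lt_reg_r with (INR n); [exact Hx|].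
    unfold Rdiv. rewrite Rmult_assoc, Rinv_l, Rmult_1_r by lra.
    assert (Cmod z / eps * eps = Cmod z) by (field; lra). nra. }
  assert (Hleft := filterlim_Cmult _ _ _ _ (filterlim_const (Cminus z (RtoC 1))) (CGamma_is_lim _ Hz1)).
  assert (Hright := filterlim_Cmult _ _ _ _ (CGamma_is_lim z Hz) Hfactor).
  rewrite Cmult_1_r in Hright.
  apply (filterlim_ext_loc _ (fun n => Cmult (Cminus z (RtoC 1)) (Gamma_seq (Cminus z (RtoC 1)) n)))
    in Hright; [|exists 1%nat; intros n Hn; symmetry; now apply Gamma_seq_sub1].
  exact (filterlim_locally_unique (K := C_AbsRing) (V := C_NormedModule) _ _ _ Hleft Hright).
Qed.

Lemma CGamma_sub_nat (z : C) (l : nat) : noninteger z ->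
  CGamma (Cminus z (RtoC (INR l))) =
  Cmult (CGamma z) (Cprod1 l (fun m => Cinv (Cminus z (RtoC (INR m))))).
Proof.
  intros Hz. induction l as [|l IH]; [simpl; now rewrite Cminus_0_r, Cmult_1_r|].
  assert (Hzl := noninteger_sub_nat z l Hz).
  rewrite <- (CGamma_sub1 _ Hzl) in IH.
  change (Cprod1 (S l) ?F) with (Cmult (Cprod1 l F) (F (S l))). cbv beta.
  replace (Cminus z (RtoC (INR (S l)))) with (Cminus (Cminus z (RtoC (INR l))) (RtoC 1))
    by (rewrite S_INR, RtoC_plus; ring).
  rewrite Cmult_assoc, <- IH. field. exact (noninteger_sub1_neq0 _ Hzl).
Qed.

Lemma locally'_C0_spec (P : C -> Prop) :
  locally' (RtoC 0) P <-> exists d, 0 < d /\ forall w, 0 < Cmod w < d -> P w.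
Proof.
  unfold locally', within. rewrite locally_C_spec.
  split; intros [d [Hd H]]; exists d; split; auto; intros w Hw.
  - apply H; [rewrite Cminus_0_r; apply Hw|]. intros ->. rewrite Cmod_0 in Hw. lra.
  - rewrite Cminus_0_r in Hw. intros Hw0. apply H. split; [now apply Cmod_gt_0 | exact Hw].
Qed.

Lemma C_differentiable_at_spec (h : C -> C) (z : C) :
  C_differentiable_at h z <->
  exists l, filterlim (fun w => Cdiv (Cminus (h (Cplus z w)) (h z)) w)
                      (locally' (RtoC 0)) (locally l).
Proof.
  unfold C_differentiable_at. setoid_rewrite filterlim_locally_ball_norm.
  setoid_rewrite locally'_C0_spec.
  split; intros [l H]; exists l.
  - intros [eps He]. exact (H eps He).
  - intros eps He. exact (H (mkposreal eps He)).
Qed.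

Lemma filterlim_Cinv (b : C) :
  b <> RtoC 0 -> filterlim Cinv (locally b) (locally (Cinv b)).
Proof.
  intros Hb. rewrite filterlim_locally_ball_norm. intros [eps He].
  apply locally_C_spec.
  assert (Hbp : 0 < Cmod b) by now apply Cmod_gt_0.
  exists (Rmin (Cmod b / 2) (eps * Cmod b ^ 2 / 2)).
  split; [apply Rmin_pos; [lra | apply Rdiv_lt_0_compat; [apply Rmult_lt_0_compat|]; nra]|].
  intros w Hw.
  assert (Hw1 := Rlt_le_trans _ _ _ Hw (Rmin_l _ _)).
  assert (Hw2 := Rlt_le_trans _ _ _ Hw (Rmin_r _ _)).
  assert (Hwb : Cmod b / 2 <= Cmod w).
  { assert (H := Cmod_le_Cmod_sub b w). rewrite Cmod_sub_sym in H. lra. }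
  assert (Hw0 : w <> RtoC 0) by (intros ->; rewrite Cmod_0 in Hwb; lra).
  change (Cmod (Cminus (Cinv w) (Cinv b)) < eps).
  replace (Cminus (Cinv w) (Cinv b)) with (Cdiv (Cminus b w) (Cmult w b)) by (field; auto).
  rewrite Cmod_div, Cmod_mult, Cmod_sub_sym by (apply Cmult_neq_0; auto).
  apply Rmult_lt_reg_r with (Cmod w * Cmod b); [nra|].
  unfold Rdiv. rewrite Rmult_assoc, Rinv_l, Rmult_1_r by nra.
  assert (eps * (Cmod b / 2) * Cmod b <= eps * Cmod w * Cmod b)
    by (apply Rmult_le_compat_r; [lra|]; apply Rmult_le_compat_l; lra).
  nra.
Qed.

Lemma filterlim_locally'_id (z : C) : filterlim (fun w => w) (locally' z) (locally z).
Proof. apply filter_le_within. Qed.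

Lemma C_differentiable_at_scal (h : C -> C) (z K : C) :
  C_differentiable_at h z -> C_differentiable_at (fun w => Cmult K (h w)) z.
Proof.
  rewrite !C_differentiable_at_spec. intros [l Hl]. exists (Cmult K l).
  apply (filterlim_ext (fun w => Cmult K (Cdiv (Cminus (h (Cplus z w)) (h z)) w))).
  { intros w. unfold Cdiv. ring. }
  exact (filterlim_Cmult _ _ _ _ (filterlim_const K) Hl).
Qed.

Lemma C_differentiable_at_div_affine (h : C -> C) (z c0 al la : C) :
  C_differentiable_at h z -> Cplus al (Cmult la z) <> RtoC 0 ->
  C_differentiable_at (fun w => Cdiv (Cminus (h w) c0) (Cplus al (Cmult la w))) z.
Proof.
  rewrite !C_differentiable_at_spec. intros [l Hl] HD.
  remember (Cplus al (Cmult la z)) as D eqn:HDdef.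
  exists (Cmult (Cplus (Cmult l D) (Copp (Cmult la (Cminus (h z) c0)))) (Cinv (Cmult D D))).
  apply (filterlim_ext_loc (fun w =>
    Cmult (Cplus (Cmult (Cdiv (Cminus (h (Cplus z w)) (h z)) w) D) (Copp (Cmult la (Cminus (h z) c0))))
          (Cinv (Cmult (Cplus D (Cmult la w)) D)))).
  - apply locally'_C0_spec.
    assert (HDp : 0 < Cmod D) by now apply Cmod_gt_0.
    exists (Cmod D / (Cmod la + 1)).
    split; [apply Rdiv_lt_0_compat; [exact HDp | assert (H := Cmod_ge_0 la); lra]|].
    intros w Hw.
    assert (Hw0 : w <> RtoC 0) by (intros ->; rewrite Cmod_0 in Hw; lra).
    assert (HDw := affine_neq0_near0 D la w (proj2 Hw)).
    replace (Cplus al (Cmult la (Cplus z w))) with (Cplus D (Cmult la w)) by (rewrite HDdef; ring).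
    field. auto.
  - apply filterlim_Cmult.
    + apply filterlim_Cplus; [|apply filterlim_const].
      exact (filterlim_Cmult _ _ _ _ Hl (filterlim_const D)).
    + assert (Hden : filterlim (fun w => Cmult (Cplus D (Cmult la w)) D) (locally' (RtoC 0))
                       (locally (Cmult (Cplus D (Cmult la (RtoC 0))) D))).
      { apply filterlim_Cmult; [|apply filterlim_const].
        apply filterlim_Cplus; [apply filterlim_const|].
        exact (filterlim_Cmult _ _ _ _ (filterlim_const la) (filterlim_locally'_id _)). }
      replace (Cplus D (Cmult la (RtoC 0))) with D in Hden by ring.
      exact (filterlim_comp _ _ _ _ _ _ _ _ Hden (filterlim_Cinv _ (Cmult_neq_0 _ _ HD HD))).
Qed.

Lemma holomorphic_at_scal (h : C -> C) (K : C) :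
  holomorphic_at h (RtoC 0) -> holomorphic_at (fun w => Cmult K (h w)) (RtoC 0).
Proof.
  intros [r [Hr H]]. exists r. split; [exact Hr|]. intros z Hz.
  now apply C_differentiable_at_scal, H.
Qed.

Lemma holomorphic_at_div_affine (h : C -> C) (c0 al la : C) :
  holomorphic_at h (RtoC 0) -> al <> RtoC 0 ->
  holomorphic_at (fun w => Cdiv (Cminus (h w) c0) (Cplus al (Cmult la w))) (RtoC 0).
Proof.
  intros [r [Hr H]] Hal.
  assert (Hap : 0 < Cmod al) by now apply Cmod_gt_0.
  assert (Hla := Cmod_ge_0 la).
  exists (Rmin r (Cmod al / (Cmod la + 1))).
  split; [apply Rmin_pos; [exact Hr | apply Rdiv_lt_0_compat; lra]|].
  intros z Hz. rewrite Cminus_0_r in Hz.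
  apply C_differentiable_at_div_affine.
  - apply H. rewrite Cminus_0_r. exact (Rlt_le_trans _ _ _ Hz (Rmin_l _ _)).
  - apply affine_neq0_near0. exact (Rlt_le_trans _ _ _ Hz (Rmin_r _ _)).
Qed.

(** * Polar parts *)

(* [polar_part g z0 N c] is, by definition, [polar_part0 (fun s => g (s + z0)) N c]. *)
Definition polar_part0 (phi : C -> C) (N : nat) (c : nat -> C) : Prop :=
  exists (h : C -> C) (d : R), 0 < d /\ holomorphic_at h (RtoC 0) /\
    forall s, 0 < Cmod s < d -> phi s = Cplus (Csum1 N (fun j => Cdiv (c j) (Cpow s j))) (h s).

Lemma polar_part0_ext (phi psi : C -> C) (N : nat) (c : nat -> C) (d0 : R) :
  0 < d0 -> (forall s, 0 < Cmod s < d0 -> phi s = psi s) ->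
  polar_part0 phi N c -> polar_part0 psi N c.
Proof.
  intros Hd0 E [h [d [Hd [Hh H]]]]. exists h, (Rmin d d0).
  split; [now apply Rmin_pos|]. split; [exact Hh|].
  intros s [Hs0 Hs]. rewrite <- E, H; [reflexivity | |].
  - split; [exact Hs0 | exact (Rlt_le_trans _ _ _ Hs (Rmin_l _ _))].
  - split; [exact Hs0 | exact (Rlt_le_trans _ _ _ Hs (Rmin_r _ _))].
Qed.

Lemma polar_part0_scal (phi : C -> C) (N : nat) (c : nat -> C) (K : C) :
  polar_part0 phi N c -> polar_part0 (fun s => Cmult K (phi s)) N (fun j => Cmult K (c j)).
Proof.
  intros [h [d [Hd [Hh H]]]]. exists (fun s => Cmult K (h s)), d.
  split; [exact Hd|]. split; [now apply holomorphic_at_scal|].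
  intros s Hs. rewrite H by exact Hs. rewrite Cmult_plus_distr_l, Csum1_scal_l.
  f_equal. apply Csum1_ext. intros j _. unfold Cdiv. ring.
Qed.

Lemma Cmult_affine_Csum1_div_pow (al la s : C) (d : nat -> C) (N : nat) : s <> RtoC 0 ->
  Cmult (Cplus al (Cmult la s)) (Csum1 N (fun j => Cdiv (d j) (Cpow s j))) =
  Cplus (Csum1 N (fun j => Cdiv (Cplus (Cmult al (d j)) (Cmult la (d (S j)))) (Cpow s j)))
        (Cminus (Cmult la (d 1%nat)) (Cdiv (Cmult la (d (S N))) (Cpow s N))).
Proof.
  intros Hs. induction N as [|N IH]; [simpl; field|].
  simpl Csum1. rewrite Cmult_plus_distr_l, IH, Cpow_S.
  assert (HN := Cpow_nz s N Hs). field. auto.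
Qed.

(* [quot_coef_rev c al la N k] is the coefficient of [s^-(N+1-k)] of the quotient of
   [sum_j c_j s^-j] by [al + la s]; it is computed downwards from [j = N]. *)
Fixpoint quot_coef_rev (c : nat -> C) (al la : C) (N k : nat) : C :=
  match k with
  | O => RtoC 0
  | S k' => Cdiv (Cminus (c (N - k')%nat) (Cmult la (quot_coef_rev c al la N k'))) al
  end.

Definition quot_coef (c : nat -> C) (al la : C) (N j : nat) : C :=
  quot_coef_rev c al la N (N + 1 - j).

Lemma quot_coef_spec (c : nat -> C) (al la : C) (N j : nat) : al <> RtoC 0 -> (1 <= j <= N)%nat ->
  c j = Cplus (Cmult al (quot_coef c al la N j)) (Cmult la (quot_coef c al la N (S j))).
Proof.
  intros Hal Hj. unfold quot_coef.
  replace (N + 1 - j)%nat with (S (N + 1 - S j)) by lia. simpl quot_coef_rev.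
  replace (N - (N + 1 - S j))%nat with j by lia. field. exact Hal.
Qed.

Lemma quot_coef_last (c : nat -> C) (al la : C) (N : nat) :
  quot_coef c al la N (S N) = RtoC 0.
Proof. unfold quot_coef. now replace (N + 1 - S N)%nat with O by lia. Qed.

Lemma quot_coef_bound (c : nat -> C) (al : C) (lr M : R) (N j : nat) :
  0 <= lr < Cmod al -> 0 <= M -> (forall j, (1 <= j <= N)%nat -> Cmod (c j) <= M) ->
  (1 <= j <= N)%nat -> Cmod (quot_coef c al (RtoC lr) N j) <= M / (Cmod al - lr).
Proof.
  intros Hlr HM Hc Hj. unfold quot_coef.
  assert (Hal : al <> RtoC 0) by (intros ->; rewrite Cmod_0 in Hlr; lra).
  generalize (N + 1 - j)%nat (ltac:(lia) : (N + 1 - j <= N)%nat). intros k Hk.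
  induction k as [|k IH]; simpl quot_coef_rev.
  - rewrite Cmod_0. apply Rdiv_le_0_compat; lra.
  - rewrite Cmod_div by exact Hal.
    apply Rmult_le_reg_r with (Cmod al); [lra|].
    unfold Rdiv at 1. rewrite Rmult_assoc, Rinv_l, Rmult_1_r by lra.
    eapply Rle_trans; [apply Cmod_triangle|].
    rewrite Cmod_opp, Cmod_mult, Cmod_R, Rabs_pos_eq by lra.
    apply Rle_trans with (M + lr * (M / (Cmod al - lr))).
    + apply Rplus_le_compat; [apply Hc; lia|].
      apply Rmult_le_compat_l; [lra | apply IH; lia].
    + right. field. lra.
Qed.

Lemma polar_part0_div_affine (phi : C -> C) (N : nat) (c : nat -> C) (al la : C) :
  al <> RtoC 0 -> polar_part0 phi N c ->
  polar_part0 (fun s => Cdiv (phi s) (Cplus al (Cmult la s))) N (quot_coef c al la N).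
Proof.
  intros Hal [h [d [Hd [Hh H]]]].
  set (c' := quot_coef c al la N).
  assert (Hap : 0 < Cmod al) by now apply Cmod_gt_0.
  assert (Hla := Cmod_ge_0 la).
  exists (fun s => Cdiv (Cminus (h s) (Cmult la (c' 1%nat))) (Cplus al (Cmult la s))),
    (Rmin d (Cmod al / (Cmod la + 1))).
  split; [apply Rmin_pos; [exact Hd | apply Rdiv_lt_0_compat; lra]|].
  split; [now apply holomorphic_at_div_affine|].
  intros s Hs.
  assert (Hs0 : s <> RtoC 0) by (intros ->; rewrite Cmod_0 in Hs; lra).
  assert (HD := affine_neq0_near0 al la s (Rlt_le_trans _ _ _ (proj2 Hs) (Rmin_r _ _))).
  assert (HN := Cpow_nz s N Hs0).
  rewrite H by (split; [apply Hs | exact (Rlt_le_trans _ _ _ (proj2 Hs) (Rmin_l _ _))]).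
  rewrite (Csum1_ext N _ (fun j => Cdiv (Cplus (Cmult al (c' j)) (Cmult la (c' (S j)))) (Cpow s j)))
    by (intros j Hj; unfold c'; now rewrite <- quot_coef_spec).
  assert (Htel := Cmult_affine_Csum1_div_pow al la s c' N Hs0).
  rewrite (quot_coef_last c al la N : c' (S N) = RtoC 0) in Htel.
  assert (HT : Csum1 N (fun j => Cdiv (Cplus (Cmult al (c' j)) (Cmult la (c' (S j)))) (Cpow s j)) =
               Cminus (Cmult (Cplus al (Cmult la s)) (Csum1 N (fun j => Cdiv (c' j) (Cpow s j))))
                      (Cmult la (c' 1%nat))).
  { rewrite Htel. field. exact HN. }
  rewrite HT. field. exact HD.
Qed.

Definition polar_part0_le (phi : C -> C) (N : nat) (M : R) : Prop :=
  exists c, polar_part0 phi N c /\ forall j, (1 <= j <= N)%nat -> Cmod (c j) <= M.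

Lemma polar_part0_le_scal (phi : C -> C) (N : nat) (M : R) (K : C) :
  polar_part0_le phi N M -> polar_part0_le (fun s => Cmult K (phi s)) N (Cmod K * M).
Proof.
  intros [c [Hc Hb]]. exists (fun j => Cmult K (c j)). split; [now apply polar_part0_scal|].
  intros j Hj. rewrite Cmod_mult. apply Rmult_le_compat_l; [apply Cmod_ge_0 | auto].
Qed.

Lemma polar_part0_le_div_affine (phi : C -> C) (N : nat) (M : R) (al : C) (lr : R) :
  0 <= M -> 0 <= lr < Cmod al -> polar_part0_le phi N M ->
  polar_part0_le (fun s => Cmult (phi s) (Cinv (Cplus al (Cmult (RtoC lr) s)))) N
                 (M * / (Cmod al - lr)).
Proof.
  intros HM Hlr [c [Hc Hb]].
  assert (Hal : al <> RtoC 0) by (intros ->; rewrite Cmod_0 in Hlr; lra).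
  exists (quot_coef c al (RtoC lr) N). split.
  - exact (polar_part0_div_affine _ _ _ _ _ Hal Hc).
  - intros j Hj. now apply quot_coef_bound.
Qed.

Lemma polar_part0_le_mul_Cprod1 (N F : nat) (P : nat -> C -> C) (k : nat -> R) :
  (forall j, (1 <= j <= F)%nat -> 0 <= k j) ->
  (forall j, (1 <= j <= F)%nat -> forall phi M, 0 <= M -> polar_part0_le phi N M ->
     polar_part0_le (fun s => Cmult (phi s) (P j s)) N (M * k j)) ->
  forall phi M, 0 <= M -> polar_part0_le phi N M ->
  polar_part0_le (fun s => Cmult (phi s) (Cprod1 F (fun j => P j s))) N (M * Rprod1 F k).
Proof.
  intros Hk HP phi M HM Hphi. induction F as [|F IH]; simpl.
  - destruct Hphi as [c [Hc Hb]]. exists c. split.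
    + apply (polar_part0_ext phi _ _ _ 1); [lra | intros s _; ring | exact Hc].
    + now rewrite Rmult_1_r.
  - destruct (HP (S F) ltac:(lia) (fun s => Cmult (phi s) (Cprod1 F (fun j => P j s))) (M * Rprod1 F k))
      as [c [Hc Hb]].
    + apply Rmult_le_pos; [exact HM|]. apply Rprod1_ge0. intros j Hj. apply Hk. lia.
    + apply IH; intros j Hj; [apply Hk | apply HP]; lia.
    + exists c. split.
      * apply (polar_part0_ext (fun s => Cmult (Cmult (phi s) (Cprod1 F (fun j => P j s))) (P (S F) s))
                               _ _ _ 1); [lra | intros s _; simpl; ring | exact Hc].
      * now rewrite <- Rmult_assoc.
Qed.

(** * Residues of the Gamma product *)

Lemma noninteger_near (w : C) :
  exists d, 0 < d /\ forall x, 0 < Cmod (Cminus x w) < d -> noninteger x.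
Proof.
  destruct (archimed (Re w)) as [Hup1 Hup2]. set (k0 := up (Re w)) in *.
  set (dist := fun k : Z =>
    if Ceq_dec w (RtoC (IZR k)) then 1 else Cmod (Cminus w (RtoC (IZR k)))).
  assert (Hdist : forall k, 0 < dist k).
  { intros k. unfold dist. destruct Ceq_dec as [|Hne]; [lra|].
    apply Cmod_gt_0. intros E. apply Hne, Ceq_minus, E. }
  exists (Rmin 1 (Rmin (dist (k0 - 1)%Z) (dist k0))).
  split; [apply Rmin_pos; [lra | now apply Rmin_pos]|].
  intros x Hx k ->.
  assert (Hx1 := Rlt_le_trans _ _ _ (proj2 Hx) (Rmin_l _ _)).
  assert (Hx2 := Rlt_le_trans _ _ _ (proj2 Hx) (Rmin_r _ _)).
  (* only [k0 - 1] and [k0] are at distance less than 1 from [w] *)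
  assert (Hk : k = (k0 - 1)%Z \/ k = k0).
  { assert (H := re_le_Cmod (Cminus (RtoC (IZR k)) w)).
    unfold Cminus in H. rewrite re_plus, re_opp, re_RtoC in H.
    destruct (proj1 (Rabs_lt_between _ _) (Rle_lt_trans _ _ _ H Hx1)) as [H1 H2].
    assert (k0 - 2 < k)%Z by (apply lt_IZR; rewrite minus_IZR; lra).
    assert (k < k0 + 1)%Z by (apply lt_IZR; rewrite plus_IZR; lra).
    lia. }
  assert (Hlt : Cmod (Cminus (RtoC (IZR k)) w) < dist k).
  { destruct Hk as [-> | ->]; eapply Rlt_le_trans; [exact Hx2 | apply Rmin_l | exact Hx2 | apply Rmin_r]. }
  unfold dist in Hlt. destruct Ceq_dec as [Ew | Ew].
  - rewrite <- Ew in Hx. replace (Cminus w w) with (RtoC 0) in Hx by ring. rewrite Cmod_0 in Hx. lra.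
  - rewrite Cmod_sub_sym in Hlt. lra.
Qed.

Lemma finite_common_radius (f : nat) (P : nat -> R -> Prop) :
  (forall j d d', 0 < d' <= d -> P j d -> P j d') ->
  (forall j, (1 <= j <= f)%nat -> exists d, 0 < d /\ P j d) ->
  exists d, 0 < d /\ forall j, (1 <= j <= f)%nat -> P j d.
Proof.
  intros Hmono. induction f as [|f IH]; intros H.
  - exists 1. split; [lra | intros j Hj; lia].
  - destruct IH as [d1 [Hd1 H1]]; [intros j Hj; apply H; lia|].
    destruct (H (S f) ltac:(lia)) as [d2 [Hd2 H2]].
    assert (Hd : 0 < Rmin d1 d2) by now apply Rmin_pos.
    exists (Rmin d1 d2). split; [exact Hd|]. intros j Hj.
    destruct (Nat.eq_dec j (S f)) as [->|E].
    + apply (Hmono _ d2); [split; [exact Hd | apply Rmin_r] | exact H2].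
    + apply (Hmono _ d1); [split; [exact Hd | apply Rmin_l] | apply H1; lia].
Qed.

Definition gamma_product (A : C) (la : R) (f : nat) (mu : nat -> C) (s : C) : C :=
  Cmult (Cexp (Cmult A (Cminus (RtoC (1/2)) s)))
        (Cprod1 f (fun j => CGamma (Cplus (Cmult (RtoC la) s) (mu j)))).

Lemma gamma_product_shift (A : C) (la : R) (f : nat) (mu : nat -> C) (rho : C) (l : nat) :
  0 < la -> exists d, 0 < d /\ forall s, 0 < Cmod s < d ->
  gamma_product A la f mu (Cplus s (Cminus rho (RtoC (INR l / la)))) =
  Cmult (Cmult (Cexp (Cmult A (RtoC (INR l / la)))) (gamma_product A la f mu (Cplus s rho)))
        (Cprod1 f (fun j => Cprod1 l (fun m =>
           Cinv (Cplus (Cminus (Cplus (Cmult (RtoC la) rho) (mu j)) (RtoC (INR m)))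
                       (Cmult (RtoC la) s))))).
Proof.
  intros Hla. set (w := fun j => Cplus (Cmult (RtoC la) rho) (mu j)).
  destruct (finite_common_radius f (fun j d => forall x, 0 < Cmod (Cminus x (w j)) < d -> noninteger x))
    as [d [Hd Hnonint]].
  { intros j d d' Hd' H x Hx. apply H. lra. }
  { intros j _. apply noninteger_near. }
  exists (d / la). split; [now apply Rdiv_lt_0_compat|]. intros s Hs.
  assert (Hla0 : RtoC la <> RtoC 0) by (intros E; apply RtoC_inj in E; lra).
  assert (Hx : forall j, (1 <= j <= f)%nat -> noninteger (Cplus (w j) (Cmult (RtoC la) s))).
  { intros j Hj. apply (Hnonint j Hj).
    replace (Cminus (Cplus (w j) (Cmult (RtoC la) s)) (w j)) with (Cmult (RtoC la) s) by ring.
    rewrite Cmod_mult, Cmod_R, Rabs_pos_eq by lra.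
    split; [now apply Rmult_lt_0_compat|].
    apply Rmult_lt_reg_r with (/ la); [now apply Rinv_0_lt_compat|].
    rewrite Rmult_comm, <- Rmult_assoc, Rinv_l, Rmult_1_l by lra. apply Hs. }
  unfold gamma_product.
  rewrite (Cprod1_ext f _ (fun j => Cmult (CGamma (Cplus (w j) (Cmult (RtoC la) s)))
             (Cprod1 l (fun m => Cinv (Cplus (Cminus (w j) (RtoC (INR m))) (Cmult (RtoC la) s)))))).
  2: { intros j Hj.
       rewrite (Cprod1_ext l _ (fun m => Cinv (Cminus (Cplus (w j) (Cmult (RtoC la) s)) (RtoC (INR m)))))
         by (intros m _; f_equal; ring).
       rewrite <- CGamma_sub_nat by now apply Hx.
       f_equal. unfold w. rewrite RtoC_div by lra. field. exact Hla0. }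
  rewrite Cprod1_mult.
  rewrite (Cprod1_ext f (fun j => CGamma (Cplus (Cmult (RtoC la) (Cplus s rho)) (mu j)))
             (fun j => CGamma (Cplus (w j) (Cmult (RtoC la) s)))) by (intros j _; f_equal; unfold w; ring).
  replace (Cmult A (Cminus (RtoC (1 / 2)) (Cplus s (Cminus rho (RtoC (INR l / la))))))
    with (Cplus (Cmult A (Cminus (RtoC (1 / 2)) (Cplus s rho))) (Cmult A (RtoC (INR l / la))))
    by ring.
  rewrite Cexp_plus. unfold w. ring.
Qed.

Lemma Cmod_one_sub_le_Cmod_sub_nat (w : C) (m : nat) : Re w <= 0 -> (1 <= m)%nat ->
  Cmod (Cminus (RtoC 1) w) <= Cmod (Cminus w (RtoC (INR m))).
Proof.
  intros Hw Hm. assert (1 <= INR m) by (apply (le_INR 1); lia).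
  destruct w as [a b]. simpl in Hw. unfold Cmod. apply sqrt_le_1_alt. simpl. nra.
Qed.

Lemma lt_Cmod_one_sub (w : C) (la : R) : Re w <= 0 -> la < 1 -> la < Cmod (Cminus (RtoC 1) w).
Proof.
  intros Hw Hla. assert (H := re_le_Cmod (Cminus (RtoC 1) w)).
  replace (Re (Cminus (RtoC 1) w)) with (1 - Re w) in H by (destruct w; simpl; ring).
  rewrite Rabs_pos_eq in H by lra. lra.
Qed.

Lemma gamma_product_residue_bound (A : C) (la : R) (f : nat) (mu : nat -> C) (rho : C)
    (n : nat) (c : nat -> C) (M : R) (l : nat) :
  0 < la < 1 -> (1 <= n)%nat -> 0 <= M -> (forall j, (1 <= j <= n)%nat -> Cmod (c j) <= M) ->
  polar_part (gamma_product A la f mu) rho n c ->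
  (forall j, (1 <= j <= f)%nat -> Re (Cplus (Cmult (RtoC la) rho) (mu j)) <= 0) ->
  exists r, is_residue (gamma_product A la f mu) (Cminus rho (RtoC (INR l / la))) r /\
    Cmod r <= exp (Re A * (INR l / la)) * M *
      Rprod1 f (fun j => Rprod1 l (fun m =>
        / (Cmod (Cminus (Cplus (Cmult (RtoC la) rho) (mu j)) (RtoC (INR m))) - la))).
Proof.
  intros Hla Hn HM Hc Hpp Hre.
  set (w := fun j => Cplus (Cmult (RtoC la) rho) (mu j)).
  set (K := Cexp (Cmult A (RtoC (INR l / la)))).
  assert (Hfactor : forall j m, (1 <= j <= f)%nat -> (1 <= m <= l)%nat ->
                      0 <= la < Cmod (Cminus (w j) (RtoC (INR m)))).
  { intros j m Hj Hm. split; [lra|]. specialize (Hre j Hj).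
    eapply Rlt_le_trans; [apply lt_Cmod_one_sub; [exact Hre | lra]|].
    apply Cmod_one_sub_le_Cmod_sub_nat; [exact Hre | lia]. }
  assert (Hshifted : polar_part0_le
    (fun s => Cmult (Cmult K (gamma_product A la f mu (Cplus s rho)))
       (Cprod1 f (fun j => Cprod1 l (fun m =>
          Cinv (Cplus (Cminus (w j) (RtoC (INR m))) (Cmult (RtoC la) s))))))
    n (Cmod K * M * Rprod1 f (fun j => Rprod1 l (fun m => / (Cmod (Cminus (w j) (RtoC (INR m))) - la))))).
  { apply polar_part0_le_mul_Cprod1.
    - intros j Hj. apply Rprod1_ge0. intros m Hm.
      assert (H := Hfactor j m Hj Hm). left. apply Rinv_0_lt_compat. lra.
    - intros j Hj phi M' HM' Hphi. apply (polar_part0_le_mul_Cprod1 n l); [| |exact HM' | exact Hphi].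
      + intros m Hm. assert (H := Hfactor j m Hj Hm). left. apply Rinv_0_lt_compat. lra.
      + intros m Hm psi M'' HM'' Hpsi. apply polar_part0_le_div_affine; auto.
    - apply Rmult_le_pos; [apply Cmod_ge_0 | exact HM].
    - apply polar_part0_le_scal. exists c. split; [exact Hpp | exact Hc]. }
  destruct Hshifted as [c' [Hc' Hb]].
  destruct (gamma_product_shift A la f mu rho l (proj1 Hla)) as [d [Hd Hshift]].
  exists (c' 1%nat). split.
  - exists n, c'. split.
    + exact (polar_part0_ext _ _ _ _ d Hd (fun s Hs => eq_sym (Hshift s Hs)) Hc').
    + destruct n; [lia | reflexivity].
  - assert (HK : Cmod K = exp (Re A * (INR l / la))) by (unfold K; now rewrite Cmod_Cexp, re_scal_r).
    rewrite <- HK. apply Hb. lia.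
Qed.

Lemma residue_factor_bound (f l : nat) (la : R) (w : nat -> C) :
  la < 1 -> (forall j, (1 <= j <= f)%nat -> Re (w j) <= 0) ->
  Rprod1 f (fun j => Rprod1 l (fun m => / (Cmod (Cminus (w j) (RtoC (INR m))) - la))) <=
  (/ Rprod1 f (fun j => Cmod (Cminus (RtoC 1) (w j)) - la)) ^ l.
Proof.
  intros Hla Hw. rewrite <- Rprod1_inv, <- Rprod1_pow.
  apply Rprod1_le. intros j Hj.
  assert (H1 := lt_Cmod_one_sub (w j) la (Hw j Hj) Hla).
  assert (Hm : forall m, (1 <= m <= l)%nat ->
                 0 < / (Cmod (Cminus (w j) (RtoC (INR m))) - la) <= / (Cmod (Cminus (RtoC 1) (w j)) - la)).
  { intros m Hm. assert (H2 := Cmod_one_sub_le_Cmod_sub_nat (w j) m (Hw j Hj) ltac:(lia)).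
    split; [apply Rinv_0_lt_compat; lra | apply Rinv_le_contravar; lra]. }
  split.
  - apply Rprod1_ge0. intros m Hmr. left. apply Hm, Hmr.
  - rewrite <- Rprod1_const. apply Rprod1_le. intros m Hmr.
    split; [left|]; apply Hm, Hmr.
Qed.

Lemma is_series_Cmod_le (a : nat -> C) (b : nat -> R) (Sa : C) (Sb : R) :
  is_series a Sa -> is_series b Sb -> (forall l, Cmod (a l) <= b l) -> Cmod Sa <= Sb.
Proof.
  intros Ha Hb Hab.
  assert (Hpartial : forall m, Cmod (sum_n a m) <= sum_n b m).
  { intros m. eapply Rle_trans; [apply (norm_sum_n_m a 0 m)|]. now apply sum_n_m_le. }
  apply (is_lim_seq_le (fun m => Cmod (sum_n a m)) (sum_n b) (Cmod Sa) Sb Hpartial); [|exact Hb].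
  exact (filterlim_comp _ _ _ _ _ _ _ _ Ha (filterlim_norm (V := C_NormedModule) Sa)).
Qed.

Lemma gamma_product_residues_geometric (A : C) (la : R) (f : nat) (mu : nat -> C) (rho : C)
    (n : nat) (c : nat -> C) (M : R) :
  0 < la < 1 -> (1 <= n)%nat -> 0 <= M -> (forall j, (1 <= j <= n)%nat -> Cmod (c j) <= M) ->
  polar_part (gamma_product A la f mu) rho n c ->
  (forall j, (1 <= j <= f)%nat -> Re (Cplus (Cmult (RtoC la) rho) (mu j)) <= 0) ->
  exists r : nat -> C, forall l,
    is_residue (gamma_product A la f mu) (Cminus rho (RtoC (INR l / la))) (r l) /\
    Cmod (r l) <= M * (exp (Re A / la) /
      Rprod1 f (fun j => Cmod (Cminus (RtoC 1) (Cplus (Cmult (RtoC la) rho) (mu j))) - la)) ^ l.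
Proof.
  intros Hla Hn HM Hc Hpole Hw.
  set (P := Rprod1 f (fun j => Cmod (Cminus (RtoC 1) (Cplus (Cmult (RtoC la) rho) (mu j))) - la)).
  apply (choice (fun l r => is_residue (gamma_product A la f mu) (Cminus rho (RtoC (INR l / la))) r
                            /\ Cmod r <= M * (exp (Re A / la) / P) ^ l)).
  intros l.
  destruct (gamma_product_residue_bound A la f mu rho n c M l Hla Hn HM Hc Hpole Hw)
    as [r [Hres Hbound]].
  exists r. split; [exact Hres|]. eapply Rle_trans; [exact Hbound|].
  replace (Re A * (INR l / la)) with (Re A / la * INR l) by (field; lra).
  rewrite exp_mult_INR. unfold Rdiv at 2. rewrite Rpow_mult_distr.
  replace (M * (exp (Re A / la) ^ l * (/ P) ^ l)) with (exp (Re A / la) ^ l * M * (/ P) ^ l) by ring.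
  apply Rmult_le_compat_l; [apply Rmult_le_pos; [apply pow_le; left; apply exp_pos | exact HM]|].
  apply residue_factor_bound; [apply Hla | exact Hw].
Qed.

Lemma series_tail_Cmod_lt (r : nat -> C) (M q : R) :
  0 < M -> 0 <= q < 1/2 -> (forall l, Cmod (r l) <= M * q ^ l) ->
  exists Sum, is_series (fun l => r (S l)) Sum /\ Cmod Sum < M.
Proof.
  intros HM Hq Hr.
  assert (Hgeom : is_series (fun l => M * q * q ^ l) (M * q * / (1 - q)))
    by exact (is_series_scal_l (M * q) _ _ (is_series_geom q ltac:(rewrite Rabs_pos_eq; lra))).
  assert (Hr1 : forall l, Cmod (r (S l)) <= M * q * q ^ l) by (intros l; rewrite Rmult_assoc; apply Hr).
  destruct (@ex_series_le C_AbsRing C_CompleteNormedModule (fun l => r (S l)) _ Hr1 (ex_intro _ _ Hgeom))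
    as [Sum HSum].
  exists Sum. split; [exact HSum|].
  eapply Rle_lt_trans; [exact (is_series_Cmod_le _ _ _ _ HSum Hgeom Hr1)|].
  apply Rmult_lt_reg_r with (1 - q); [lra|].
  rewrite Rmult_assoc, Rinv_l, Rmult_1_r by lra. nra.
Qed.

Theorem lemma5p2 (f : nat) (lam : nat -> R) (mu : nat -> C) (eta u : R)
  (rho : C) (n : nat) (c : nat -> C) :
  (1 <= f)%nat ->
  (forall j, (1 <= j <= f)%nat -> 0 < lam j /\ lam j = lam 1%nat) ->
  lam 1%nat < 1 ->
  -1 < eta < 1 ->
  let g : C -> C := fun s =>
    Cmult (Cexp (Cmult (Cplus (RtoC u) (Cmult Ci (RtoC (PI * INR f / 4 * eta))))
                       (Cminus (RtoC (1/2)) s)))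
          (Cprod1 f (fun j => CGamma (Cplus (Cmult (RtoC (lam j)) s) (mu j)))) in
  pole_of_order g rho n c ->
  (forall j, (1 <= j <= f)%nat -> Re (Cplus (Cmult (RtoC (lam j)) rho) (mu j)) <= 0) ->
  exp (u / lam 1%nat) /
    Rprod1 f (fun j => Cmod (Cminus (Cminus (RtoC 1) (Cmult (RtoC (lam j)) rho)) (mu j)) - lam j)
    < 1/2 ->
  exists r : nat -> C,
    (forall l, (1 <= l)%nat -> is_residue g (Cminus rho (RtoC (INR l / lam 1%nat))) (r l)) /\
    exists Sum : C, is_series (fun l => r (S l)) Sum /\ Cmod Sum < Rmax1 n (fun j => Cmod (c j)).
Proof.
  intros Hf Hlam Hla1 _ g [Hn [Hcn Hpole]] Hre Hq.
  set (la := lam 1%nat) in *. assert (Hla : 0 < la) by (apply (Hlam 1%nat); lia).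
  set (A := Cplus (RtoC u) (Cmult Ci (RtoC (PI * INR f / 4 * eta)))) in g.
  assert (Hg : g = gamma_product A la f mu).
  { apply functional_extensionality. intros s. unfold g, gamma_product. f_equal.
    apply Cprod1_ext. intros j Hj. now rewrite (proj2 (Hlam j Hj)). }
  rewrite Hg in Hpole |- *.
  assert (Hw : forall j, (1 <= j <= f)%nat -> Re (Cplus (Cmult (RtoC la) rho) (mu j)) <= 0)
    by (intros j Hj; rewrite <- (proj2 (Hlam j Hj)); now apply Hre).
  set (M := Rmax1 n (fun j => Cmod (c j))).
  assert (HMc : forall j, (1 <= j <= n)%nat -> Cmod (c j) <= M) by exact (Rmax1_ge n _).
  assert (HM : 0 < M) by (apply Rlt_le_trans with (Cmod (c n)); [now apply Cmod_gt_0 | apply HMc; lia]).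
  destruct (gamma_product_residues_geometric A la f mu rho n c M ltac:(lra) Hn ltac:(lra) HMc Hpole Hw)
    as [r Hr].
  exists r. split; [intros l _; apply Hr|].
  set (q := exp (Re A / la) /
            Rprod1 f (fun j => Cmod (Cminus (RtoC 1) (Cplus (Cmult (RtoC la) rho) (mu j))) - la)) in Hr.
  apply (series_tail_Cmod_lt r M q HM); [|intros l; apply Hr].
  unfold q. replace (Re A) with u by (unfold A; simpl; ring).
  split; [apply Rlt_le, Rdiv_lt_0_compat; [apply exp_pos | apply Rprod1_pos]|].
  - intros j Hj. assert (H := lt_Cmod_one_sub _ la (Hw j Hj) Hla1). lra.
  - erewrite Rprod1_ext; [exact Hq|]. intros j Hj. cbv beta. rewrite (proj2 (Hlam j Hj)).
    f_equal. f_equal. ring.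
Qed.
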